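(* Let $n\in\mathbb N$ and put $n_0:=n$; let $\mathbf m=(m_1,\ldots,m_p)\in\mathbb N^p$, $\boldsymbol\varepsilon=(\varepsilon_1,\ldots,\varepsilon_p)\in\{\pm1\}^p$ and $|x|<1$. Then \[ n\int_0^x t^{n-1}dt\,w_{\varepsilon_1}w_0^{m_1-1}w_{\varepsilon_2}w_0^{m_2-1}\cdots w_{\varepsilon_p}w_0^{m_p-1} =(-1)^p\sum_{n\ge n_1\ge\cdots\ge n_p\ge1}x^{n_p}\prod_{j=1}^p\frac{1+\varepsilon_j(-1)^{n_{j-1}+n_j}}{n_j^{m_j}} \] \[ +\frac12\sum_{j=1}^p(-1)^{j-1}\,\mathrm{Mi}_{m_p,\ldots,m_j}\big(-\mathbf q(\varepsilon_{j+1},\ldots,\varepsilon_p),-1;x\big)\big(1-\varepsilon_1\cdots\varepsilon_j(-1)^n\big)M^\star_n\big(m_1,\ldots,m_{j-1};-\mathbf p(\varepsilon_2,\ldots,\varepsilon_j)\big) \] \[ +\frac12\sum_{j=1}^p(-1)^{j-1}\,\mathrm{Mi}_{m_p,\ldots,m_j}\big(\mathbf q(\varepsilon_{j+1},\ldots,\varepsilon_p),1;x\big)\big(1+\varepsilon_1\cdots\varepsilon_j(-1)^n\big)M^\star_n\big(m_1,\ldots,m_{j-1};\mathbf p(\varepsilon_2,\ldots,\varepsilon_j)\big), \] where for $j=p$ the sign vector of $\mathrm{Mi}$ is just $(\mp1)$ resp. $(1)$, and for $j=1$ the $M^\star_n$ factor is $1$.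
   Context: Iterated integrals: $\int_a^b f_q\cdots f_1:=\int_{a<t_q<\cdots<t_1<b}f_q(t_q)\cdots f_1(t_1)$ (leftmost form carries the smallest variable); $w_0=dt/t$, $w_{-1}=2\,dt/(1-t^2)$, $w_1=2t\,dt/(1-t^2)$, $w_0^{0}$ means absent. For $\boldsymbol\varepsilon=(\varepsilon_1,\ldots,\varepsilon_r)\in\{\pm1\}^r$: $\mathbf p(\boldsymbol\varepsilon)=(\varepsilon_1\varepsilon_2\cdots\varepsilon_r,\varepsilon_2\cdots\varepsilon_r,\ldots,\varepsilon_{r-1}\varepsilon_r,\varepsilon_r)$, $\mathbf q(\boldsymbol\varepsilon)=(\varepsilon_1\cdots\varepsilon_r,\varepsilon_1\cdots\varepsilon_{r-1},\ldots,\varepsilon_1\varepsilon_2,\varepsilon_1)$; these are empty for empty input, and $a\boldsymbol\varepsilon=(a\varepsilon_1,\ldots,a\varepsilon_r)$. Multiple $M$-harmonic star sum: $M^\star_n(\mathbf k;\boldsymbol\varepsilon)=\sum_{n\ge n_1\ge\cdots\ge n_r\ge1}\prod_j(1+\varepsilon_j(-1)^{n_j})/n_j^{k_j}$, $M^\star_n(\emptyset;\emptyset)=1$. Multiple $M$-polylogarithm: $\mathrm{Mi}_{\mathbf k}(\boldsymbol\varepsilon;x)=\sum_{n_1>\cdots>n_r>0}x^{n_1}\prod_j(1+\varepsilon_j(-1)^{n_j})/n_j^{k_j}$. *)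

From Stdlib Require Import Reals List.
From Coquelicot Require Import Coquelicot.
Import ListNotations.
Open Scope R_scope.

Definition sgn (b : bool) : R := if b then 1 else -1.

Fixpoint sumR (n : nat) (f : nat -> R) : R :=
  match n with O => 0 | S m => sumR m f + f (S m) end.

(* Differential forms (as densities w.r.t. dt) *)
Definition w0 (t : R) : R := / t.
Definition wm1 (t : R) : R := 2 / (1 - t ^ 2).
Definition wp1 (t : R) : R := 2 * t / (1 - t ^ 2).
Definition weps (b : bool) : R -> R := if b then wp1 else wm1.

(* Iterated integral, oriented (Chen) version.
   itint a [f_q; ...; f_1] b = int_{a < t_q < ... < t_1 < b} f_q(t_q)...f_1(t_1),
   the leftmost form carrying the smallest variable. *)
Fixpoint itint_rev (a : R) (l : list (R -> R)) (b : R) : R :=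
  match l with
  | [] => 1
  | f :: fs => RInt (fun t => f t * itint_rev a fs t) a b
  end.
Definition itint (a : R) (l : list (R -> R)) (b : R) : R := itint_rev a (rev l) b.

Definition coef (m : nat) (e : R) (k : nat) : R := (1 + e * (-1) ^ k) / (INR k) ^ m.

(* Multiple M-harmonic star sum on a list of pairs (k_j, eps_j):
   sum_{n >= n_1 >= ... >= n_r >= 1} prod_j (1 + eps_j (-1)^{n_j}) / n_j^{k_j} *)
Fixpoint Mstar_l (n : nat) (l : list (nat * R)) : R :=
  match l with
  | [] => 1
  | (k, e) :: rest => sumR n (fun n1 => coef k e n1 * Mstar_l n1 rest)
  end.
Definition Mstar (n : nat) (ks : list nat) (es : list R) : R := Mstar_l n (combine ks es).

Fixpoint Hstrict_l (n : nat) (l : list (nat * R)) : R :=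
  match l with
  | [] => 1
  | (k, e) :: rest => sumR (pred n) (fun n1 => coef k e n1 * Hstrict_l n1 rest)
  end.

(* Multiple M-polylogarithm:
   Mi_k(eps; x) = sum_{n_1 > ... > n_r > 0} x^{n_1} prod_j (1 + eps_j (-1)^{n_j}) / n_j^{k_j} *)
Definition Mi_l (l : list (nat * R)) (x : R) : R :=
  match l with
  | [] => 1
  | (k, e) :: rest =>
      Series (fun i => x ^ (S i) * coef k e (S i) * Hstrict_l (S i) rest)
  end.
Definition Mi (ks : list nat) (es : list R) (x : R) : R := Mi_l (combine ks es) x.

Definition prodR (l : list R) : R := fold_right Rmult 1 l.

Fixpoint pvec (l : list R) : list R :=
  match l with
  | [] => []
  | e :: es => (e * prodR es) :: pvec es
  end.
(* q(eps) = (eps_1...eps_r, eps_1...eps_{r-1}, ..., eps_1) *)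
Definition qvec (l : list R) : list R := pvec (rev l).

Definition theword (n : nat) (ms : list nat) (es : list bool) : list (R -> R) :=
  (fun t => t ^ (n - 1)) ::
  flat_map (fun me : nat * bool => weps (snd me) :: repeat w0 (fst me - 1)) (combine ms es).

(* First sum: sum_{n_0 >= n_1 >= ... >= n_p >= 1} x^{n_p}
              prod_j (1 + eps_j (-1)^{n_{j-1}+n_j}) / n_j^{m_j} *)
Fixpoint firstsum (x : R) (prev : nat) (l : list (nat * R)) : R :=
  match l with
  | [] => x ^ prev
  | (m, e) :: rest =>
      sumR prev (fun k => (1 + e * (-1) ^ (prev + k)) / (INR k) ^ m * firstsum x k rest)
  end.

From Stdlib Require Import Reals List.
From Coquelicot Require Import Coquelicot.
Import ListNotations.
Open Scope R_scope.
From Stdlib Require Import Lra Lia.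

(* On the open unit disc every function occurring in the iterated integral is
   a power series whose coefficients are bounded and vanish at index 0
   (predicate [represents]).  Integrating against w_0 divides the N-th
   coefficient by N, and since w_e = sum_k (1 - e (-1)^k) t^k, integrating
   against w_e maps a to M |-> (1/M) sum_{N<M} (1 + e (-1)^(M+N)) a_N.  Hence a
   block w_e w_0^(m-1) acts on coefficients by [block_op m e], and
   n * (left-hand side) is the value at x of the series obtained from the
   Kronecker delta at n by applying the blocks of the word in order
   ([word_series], lemma [itint_word_series]).
   The first block maps delta_n to the Mi-coefficients of sign e_1 (-1)^n minus
   a finite combination of the deltas at N <= n ([block_delta]), and blocks map
   Mi-coefficient sequences to Mi-coefficient sequences of larger depth
   ([blocks_Mi_coef]).  This gives a recursion for [word_series] in the depth
   ([word_series_cons]); the right-hand side satisfies the same recursion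
   ([rhs_cons]), the inner sums reassembling into the M-star factors
   ([rhs_term_cons]). *)

(* [sumN M f = f 0 + ... + f (M-1)]: convolutions of power series start at
   index 0, whereas [sumR] of the statement starts at 1. *)
Fixpoint sumN (M : nat) (f : nat -> R) : R :=
  match M with O => 0 | S k => sumN k f + f k end.

Lemma sumN_ext M f g : (forall N, (N < M)%nat -> f N = g N) -> sumN M f = sumN M g.
Proof.
  induction M; simpl; intros H; auto.
  rewrite IHM by (intros; apply H; lia). rewrite H by lia. auto.
Qed.

Lemma sumN_bound M f B :
  (forall N, (N < M)%nat -> Rabs (f N) <= B) -> Rabs (sumN M f) <= INR M * B.
Proof.
  induction M; intros H; simpl sumN.
  - rewrite Rabs_R0; simpl; lra.
  - eapply Rle_trans; [apply Rabs_triang|].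
    assert (Rabs (sumN M f) <= INR M * B) by (apply IHM; intros; apply H; lia).
    assert (Rabs (f M) <= B) by (apply H; lia). rewrite S_INR. lra.
Qed.

Lemma sumN_lin M w f g al be :
  sumN M (fun N => w N * (al * f N + be * g N)) =
  al * sumN M (fun N => w N * f N) + be * sumN M (fun N => w N * g N).
Proof. induction M; simpl; [ring|rewrite IHM; ring]. Qed.

Lemma sumN_sumR M f : f 0%nat = 0 -> sumN M f = sumR (pred M) f.
Proof.
  intros H0. induction M; simpl; auto.
  destruct M; simpl in *; [rewrite H0; ring|]. rewrite IHM. auto.
Qed.

Lemma sumR_ext n f g : (forall j, (1 <= j <= n)%nat -> f j = g j) -> sumR n f = sumR n g.
Proof.
  induction n; simpl; intros H; auto.
  rewrite IHn by (intros; apply H; lia). rewrite H by lia; auto.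
Qed.

Lemma sumR_plus n f g : sumR n (fun j => f j + g j) = sumR n f + sumR n g.
Proof. induction n; simpl; [ring|rewrite IHn; ring]. Qed.

Lemma sumR_scal n c f : sumR n (fun j => c * f j) = c * sumR n f.
Proof. induction n; simpl; [ring|rewrite IHn; ring]. Qed.

Lemma sumR_zero n : sumR n (fun _ => 0) = 0.
Proof. induction n; simpl; [ring|rewrite IHn; ring]. Qed.

Lemma sumR_shift n f : sumR (S n) f = f 1%nat + sumR n (fun j => f (S j)).
Proof. induction n; simpl in *; [ring|]. rewrite IHn. ring. Qed.

Lemma sumR_swap n p (f : nat -> nat -> R) :
  sumR n (fun N => sumR p (fun j => f N j)) = sumR p (fun j => sumR n (fun N => f N j)).
Proof. induction n; simpl; [rewrite sumR_zero; auto|rewrite IHn, <- sumR_plus; auto]. Qed.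

Lemma pm1_S k : (-1) ^ (S k) = - (-1) ^ k.
Proof. simpl; ring. Qed.

Lemma pm1_sq k : (-1) ^ k * (-1) ^ k = 1.
Proof. rewrite <- pow_add. replace (k + k)%nat with (2 * k)%nat by lia. apply pow_1_even. Qed.

Lemma pm1_cases n : (-1) ^ n = 1 \/ (-1) ^ n = -1.
Proof.
  destruct (Nat.Even_or_Odd n) as [[k Hk]|[k Hk]]; subst.
  - left; apply pow_1_even.
  - right. replace (2 * k + 1)%nat with (S (2 * k)) by lia. apply pow_1_odd.
Qed.

Lemma sgn_abs b : Rabs (sgn b) = 1.
Proof. destruct b; simpl; [apply Rabs_R1|rewrite Rabs_left; lra]. Qed.

Lemma sgn_sq b : sgn b * sgn b = 1.
Proof. destruct b; simpl; ring. Qed.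

Lemma prodR_sgn_sq l : prodR (map sgn l) * prodR (map sgn l) = 1.
Proof.
  induction l; simpl; [ring|].
  transitivity ((sgn a * sgn a) * (prodR (map sgn l) * prodR (map sgn l))); [ring|].
  rewrite sgn_sq, IHl. ring.
Qed.

(* For signs e, A: (1 + e' B A)(1 + e A) = (1 + e' e B)(1 + e A), because the
   second factor vanishes unless A = e.  This is how the parity conditions of
   consecutive summation indices propagate. *)
Lemma sign_identity e e' A B : e * e = 1 -> A * A = 1 ->
  (1 + e' * (B * A)) * (1 + e * A) = (1 + e' * e * B) * (1 + e * A).
Proof.
  intros He HA.
  assert (E : (1 + e' * (B * A)) * (1 + e * A) - (1 + e' * e * B) * (1 + e * A)
              = e' * B * (A * (1 - e * e) + e * (A * A - 1))) by ring.
  rewrite He, HA in E. lra.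
Qed.

Lemma sign_interpolation (G : R -> R) s : s = 1 \/ s = -1 ->
  G s = / 2 * (G (-1) * (1 + -1 * s) + G 1 * (1 + 1 * s)).
Proof. intros [H|H]; subst; field. Qed.

Definition bounded (a : nat -> R) : Prop := exists C, forall N, Rabs (a N) <= C.

Lemma bounded_inside_radius a x :
  bounded a -> Rabs x < 1 -> Rbar_lt (Rabs x) (CV_radius a).
Proof.
  intros [C HC] Hx. destruct (CV_radius_bounded a) as [Hub _].
  eapply Rbar_lt_le_trans; [|apply Hub]; [exact Hx|].
  exists C. intros N. rewrite pow1, Rmult_1_r. apply HC.
Qed.

Lemma ex_pseries_bounded a x : bounded a -> Rabs x < 1 -> ex_pseries a x.
Proof. intros; apply CV_radius_inside, bounded_inside_radius; auto. Qed.

Lemma ex_pseries_scal' c f t : ex_pseries f t -> ex_pseries (fun n => c * f n) t.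
Proof. intros H. exact (@ex_pseries_scal R_AbsRing R_NormedModule c f t (Rmult_comm _ _) H). Qed.

Lemma PSeries_scal' c f t : PSeries (fun n => c * f n) t = c * PSeries f t.
Proof. rewrite <- PSeries_scal. apply PSeries_ext; reflexivity. Qed.

Lemma PSeries_plus' f g t : ex_pseries f t -> ex_pseries g t ->
  PSeries (fun n => f n + g n) t = PSeries f t + PSeries g t.
Proof. intros; rewrite <- PSeries_plus by auto. apply PSeries_ext; reflexivity. Qed.

Lemma PSeries_minus' f g t : ex_pseries f t -> ex_pseries g t ->
  PSeries (fun n => f n - g n) t = PSeries f t - PSeries g t.
Proof. intros; rewrite <- PSeries_minus by auto. apply PSeries_ext; reflexivity. Qed.

Lemma PSeries_zero x : PSeries (fun _ => 0) x = 0.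
Proof.
  rewrite (PSeries_ext _ (fun n => 0 * (fun _ => 0) n)) by (intros; ring).
  rewrite PSeries_scal'. ring.
Qed.

Lemma PSeries_sumR x n c (B : nat -> nat -> R) : Rabs x < 1 ->
  (forall N, (1 <= N <= n)%nat -> ex_pseries (B N) x) ->
  ex_pseries (fun M => sumR n (fun N => c N * B N M)) x /\
  PSeries (fun M => sumR n (fun N => c N * B N M)) x = sumR n (fun N => c N * PSeries (B N) x).
Proof.
  intros Hx. induction n; intros HB; simpl.
  - split; [|apply PSeries_zero].
    apply ex_pseries_bounded; auto. exists 0; intros; rewrite Rabs_R0; lra.
  - destruct IHn as [IH1 IH2]; [intros; apply HB; lia|].
    assert (E : ex_pseries (fun M => c (S n) * B (S n) M) x) by (apply ex_pseries_scal', HB; lia).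
    split.
    + exact (@ex_pseries_plus R_AbsRing R_NormedModule _ _ x IH1 E).
    + rewrite PSeries_plus' by auto. rewrite IH2, PSeries_scal'. auto.
Qed.

(* The Kronecker delta at k, i.e. the coefficients of t^k. *)
Definition delta (k N : nat) : R := if Nat.eqb N k then 1 else 0.

Lemma bounded_delta k : bounded (delta k).
Proof.
  exists 1. intros M; unfold delta. destruct (Nat.eqb M k); rewrite ?Rabs_R1, ?Rabs_R0; lra.
Qed.

Lemma PSeries_delta n x : Rabs x < 1 -> PSeries (delta n) x = x ^ n.
Proof.
  intros Hx.
  rewrite (PSeries_ext _ (PS_incr_n (delta 0) n)).
  2:{ intros N. rewrite PS_incr_n_simplify. unfold delta.
      destruct (Compare_dec.le_lt_dec n N), (Nat.eqb_spec N n), (Nat.eqb_spec (N - n) 0);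
      try lia; auto. }
  rewrite PSeries_incr_n, PSeries_decr_1 by (apply ex_pseries_bounded; [apply bounded_delta|auto]).
  unfold delta at 1; simpl. rewrite (PSeries_ext _ (fun _ => 0)) by reflexivity.
  rewrite PSeries_zero. ring.
Qed.

Definition represents (F : R -> R) (a : nat -> R) : Prop :=
  a 0%nat = 0 /\ bounded a /\ forall t, Rabs t < 1 -> F t = PSeries a t.

Lemma represents_ext F G a b :
  (forall t, Rabs t < 1 -> F t = G t) -> (forall N, a N = b N) ->
  represents F a -> represents G b.
Proof.
  intros HF Hab [H0 [[C HC] HP]]. split; [rewrite <- Hab; auto|split].
  - exists C; intros N; rewrite <- Hab; auto.
  - intros t Ht. rewrite <- HF by auto. rewrite HP by auto. apply PSeries_ext; auto.
Qed.

Lemma segment_in_disc t b : Rabs b < 1 -> Rmin 0 b < t < Rmax 0 b -> t <> 0 /\ Rabs t < 1.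
Proof.
  intros Hb H. unfold Rmin, Rmax in H. destruct (Rle_dec 0 b); split;
  try (intro; subst; lra); apply Rabs_lt_between in Hb; apply Rabs_lt_between; lra.
Qed.

Definition integrate (f : R -> R) (F : R -> R) : R -> R := fun b => RInt (fun t => f t * F t) 0 b.

Lemma represents_w0 F a :
  represents F a -> represents (integrate w0 F) (fun N => a N / INR N).
Proof.
  intros [H0 [[C HC] HP]]. split; [|split].
  - rewrite H0. unfold Rdiv; ring.
  - exists C. intros [|N].
    + rewrite H0. unfold Rdiv. rewrite Rmult_0_l, Rabs_R0.
      specialize (HC 0%nat). pose proof (Rabs_pos (a 0%nat)); lra.
    + unfold Rdiv. rewrite Rabs_mult, Rabs_inv.
      assert (1 <= Rabs (INR (S N))).
      { rewrite Rabs_right by apply Rle_ge, pos_INR. rewrite S_INR; pose proof (pos_INR N); lra. }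
      assert (0 < / Rabs (INR (S N)) <= 1).
      { split; [apply Rinv_0_lt_compat; lra|]. rewrite <- Rinv_1. apply Rinv_le_contravar; lra. }
      specialize (HC (S N)). pose proof (Rabs_pos (a (S N))). nra.
  - intros b Hb. unfold integrate.
    assert (Hr : Rbar_lt (Rabs b) (CV_radius (PS_decr_1 a))).
    { rewrite CV_radius_decr_1. apply bounded_inside_radius; auto. exists C; auto. }
    rewrite (RInt_ext _ (PSeries (PS_decr_1 a))).
    + rewrite RInt_PSeries by auto. apply PSeries_ext.
      intros [|N]; unfold PS_Int, PS_decr_1; [rewrite H0; simpl; unfold Rdiv; ring|reflexivity].
    + intros t Ht. destruct (segment_in_disc t b Hb Ht) as [Ht0 Ht1].
      rewrite HP by auto.
      rewrite (PSeries_decr_1 a t) by (apply ex_pseries_bounded; auto; exists C; auto).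
      rewrite H0. unfold w0. rewrite Rplus_0_l, <- Rmult_assoc, Rinv_l, Rmult_1_l; auto.
Qed.

(* Coefficients of w_e(t) A(t) = sum_k (1 - e (-1)^k) t^k * A(t). *)
Definition weps_product (e : R) (a : nat -> R) (K : nat) : R :=
  sumN (S K) (fun N => (1 - e * (-1) ^ (K + N)) * a N).

(* Coefficients of the primitive of w_e(t) A(t) vanishing at 0. *)
Definition weps_primitive (e : R) (a : nat -> R) (M : nat) : R :=
  sumN M (fun N => (1 + e * (-1) ^ (M + N)) * a N) / INR M.

Lemma bounded_weps_primitive e a : Rabs e <= 1 -> bounded a -> bounded (weps_primitive e a).
Proof.
  intros He [C HC]. exists (2 * C). intros [|M].
  - unfold weps_primitive; simpl. unfold Rdiv; rewrite Rmult_0_l, Rabs_R0.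
    specialize (HC 0%nat); pose proof (Rabs_pos (a 0%nat)); lra.
  - unfold weps_primitive, Rdiv. rewrite Rabs_mult.
    assert (Hs : Rabs (sumN (S M) (fun N => (1 + e * (-1) ^ (S M + N)) * a N))
                 <= INR (S M) * (2 * C)).
    { apply sumN_bound. intros N _. rewrite Rabs_mult.
      assert (Rabs (1 + e * (-1) ^ (S M + N)) <= 2).
      { eapply Rle_trans; [apply Rabs_triang|]. rewrite Rabs_R1, Rabs_mult, pow_1_abs. lra. }
      specialize (HC N). pose proof (Rabs_pos (a N)).
      pose proof (Rabs_pos (1 + e * (-1) ^ (S M + N))). nra. }
    assert (HI : 0 < INR (S M)) by (apply lt_0_INR; lia).
    rewrite Rabs_inv, (Rabs_right (INR (S M))) by lra.
    apply (Rmult_le_reg_r (INR (S M))); auto. rewrite Rmult_assoc, Rinv_l by lra. lra.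
Qed.

(* The product series is the derivative of the primitive series, so both
   converge on the unit disc. *)
Lemma weps_product_derive e a K : weps_product e a K = PS_derive (weps_primitive e a) K.
Proof.
  unfold weps_product, PS_derive, weps_primitive. field_simplify_eq; [|apply not_0_INR; lia].
  apply sumN_ext. intros N _. simpl (S K + N)%nat. rewrite pm1_S. ring.
Qed.

Lemma weps_product_radius e a x : Rabs e <= 1 -> bounded a -> Rabs x < 1 ->
  Rbar_lt (Rabs x) (CV_radius (weps_product e a)).
Proof.
  intros He Ha Hx.
  rewrite (CV_radius_ext _ (PS_derive (weps_primitive e a))) by (intros; apply weps_product_derive).
  rewrite CV_radius_derive. apply bounded_inside_radius; auto. apply bounded_weps_primitive; auto.
Qed.

(* Cauchy product with w_e: (1 - t^2) C(t) = ((1 - e) + (1 + e) t) A(t). *)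
Lemma weps_mult b a t : bounded a -> Rabs t < 1 ->
  weps b t * PSeries a t = PSeries (weps_product (sgn b) a) t.
Proof.
  intros Hb Ht. set (e := sgn b). set (c := weps_product e a).
  assert (He : Rabs e <= 1) by (unfold e; rewrite sgn_abs; lra).
  assert (Hc : ex_pseries c t) by (apply CV_radius_inside, weps_product_radius; auto).
  assert (Ha : ex_pseries a t) by (apply ex_pseries_bounded; auto).
  assert (Ht2 : 1 - t ^ 2 <> 0).
  { apply Rabs_lt_between in Ht. assert (t * t < 1) by nra. simpl. lra. }
  assert (Key : (1 - t ^ 2) * PSeries c t = ((1 - e) + (1 + e) * t) * PSeries a t).
  { rewrite Rmult_minus_distr_r, Rmult_1_l, <- PSeries_incr_n.
    rewrite <- PSeries_minus' by (auto; apply ex_pseries_incr_n; auto).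
    rewrite Rmult_plus_distr_r, Rmult_assoc, <- PSeries_incr_1, <- !PSeries_scal'.
    rewrite <- PSeries_plus' by
      (apply ex_pseries_scal'; auto; apply ex_pseries_incr_1; auto).
    apply PSeries_ext. intros n. rewrite PS_incr_n_simplify.
    destruct n as [|[|k]]; simpl PS_incr_1; unfold c, weps_product; simpl;
      change (@zero R_NormedModule) with 0; [ring|ring|].
    replace (sumN k (fun N => (1 - e * (-1 * (-1 * (-1) ^ (k + N)))) * a N))
      with (sumN k (fun N => (1 - e * (-1) ^ (k + N)) * a N))
      by (apply sumN_ext; intros; f_equal; ring).
    replace (k - 0)%nat with k by lia.
    replace ((-1) ^ (k + S k)) with (-1)
      by (replace (k + S k)%nat with (S (2 * k)) by lia; rewrite pow_1_odd; auto).
    replace ((-1) ^ (k + S (S k))) with 1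
      by (replace (k + S (S k))%nat with (2 * S k)%nat by lia; rewrite pow_1_even; auto).
    ring. }
  apply (Rmult_eq_reg_l (1 - t ^ 2)); auto. rewrite Key.
  unfold e, sgn, weps, wp1, wm1; destruct b; field; auto.
Qed.

Lemma represents_weps b F a :
  represents F a -> represents (integrate (weps b) F) (weps_primitive (sgn b) a).
Proof.
  intros [H0 [Hb HP]]. set (e := sgn b).
  assert (He : Rabs e <= 1) by (unfold e; rewrite sgn_abs; lra).
  split; [|split].
  - unfold weps_primitive; simpl. unfold Rdiv; ring.
  - apply bounded_weps_primitive; auto.
  - intros x Hx. unfold integrate.
    rewrite (RInt_ext _ (PSeries (weps_product e a))).
    + rewrite RInt_PSeries by (apply weps_product_radius; auto). apply PSeries_ext.
      intros [|N]; unfold PS_Int, weps_primitive; [simpl; unfold Rdiv; ring|].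
      unfold weps_product. f_equal. apply sumN_ext. intros k _. simpl (S N + k)%nat.
      rewrite pm1_S. ring.
    + intros t Ht. destruct (segment_in_disc t x Hx Ht) as [Ht0 Ht1].
      rewrite HP by auto. apply weps_mult; auto.
Qed.

Fixpoint integrate_forms (l : list (R -> R)) (F : R -> R) : R -> R :=
  match l with [] => F | f :: fs => integrate_forms fs (integrate f F) end.

Lemma integrate_forms_app l1 l2 F t :
  integrate_forms (l1 ++ l2) F t = integrate_forms l2 (integrate_forms l1 F) t.
Proof. revert F; induction l1; simpl; intros; auto. Qed.

(* The outermost integrals of [itint_rev] are the last forms of the word. *)
Lemma itint_integrate_forms l l' b :
  itint_rev 0 (rev l ++ l') b = integrate_forms l (itint_rev 0 l') b.
Proof.
  revert l' b; induction l as [|f fs IH]; intros l' b; simpl; auto.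
  rewrite <- app_assoc. simpl. rewrite IH. reflexivity.
Qed.

Definition block_op (m : nat) (e : R) (a : nat -> R) (M : nat) : R :=
  sumN M (fun N => (1 + e * (-1) ^ (M + N)) * a N) / INR M ^ m.

Lemma represents_w0_pow k j e a G :
  represents G (block_op (S j) e a) ->
  represents (integrate_forms (repeat w0 k) G) (block_op (S (j + k)) e a).
Proof.
  revert j G; induction k; intros j G H; simpl; [rewrite Nat.add_0_r; auto|].
  rewrite <- plus_n_Sm. apply (IHk (S j)).
  eapply represents_ext; [| |apply represents_w0, H]; auto.
  intros M. unfold block_op, Rdiv. rewrite Rmult_assoc. f_equal.
  change (INR M ^ S (S j)) with (INR M * INR M ^ S j). rewrite Rinv_mult. ring.
Qed.

Lemma represents_block m b F a : (1 <= m)%nat -> represents F a ->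
  represents (integrate_forms (weps b :: repeat w0 (m - 1)) F) (block_op m (sgn b) a).
Proof.
  intros Hm H. simpl. replace m with (S (0 + (m - 1))) at 2 by lia.
  apply represents_w0_pow. eapply represents_ext; [| |apply represents_weps, H]; auto.
  intros M. unfold block_op, weps_primitive. simpl. rewrite Rmult_1_r. auto.
Qed.

Fixpoint blocks_op (L : list (nat * R)) (a : nat -> R) : nat -> R :=
  match L with [] => a | (m, e) :: L' => blocks_op L' (block_op m e a) end.

Definition blocks (ms : list nat) (es : list bool) : list (R -> R) :=
  flat_map (fun me : nat * bool => weps (snd me) :: repeat w0 (fst me - 1)) (combine ms es).

Lemma represents_blocks ms es F a :
  length ms = length es -> List.Forall (fun m => (1 <= m)%nat) ms -> represents F a ->
  represents (integrate_forms (blocks ms es) F) (blocks_op (combine ms (map sgn es)) a).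
Proof.
  revert es F a; induction ms as [|m ms IH]; intros [|b es] F a Hl Hf HR;
    simpl in *; try lia; auto.
  inversion Hf; subst. unfold blocks in *. simpl.
  eapply represents_ext; [intros; symmetry; apply integrate_forms_app|reflexivity|].
  apply IH; auto. apply represents_block; auto.
Qed.

(* Coefficients stay bounded along the blocks (read off [represents_blocks]
   applied to the power series of [a] itself). *)
Lemma bounded_blocks_op ms es a : a 0%nat = 0 -> bounded a -> length ms = length es ->
  List.Forall (fun m => (1 <= m)%nat) ms -> bounded (blocks_op (combine ms (map sgn es)) a).
Proof.
  intros H0 Hb Hl Hf.
  assert (HR : represents (PSeries a) a) by (split; [|split]; auto).
  apply (represents_blocks ms es _ _ Hl Hf HR).
Qed.

Lemma represents_initial n : (1 <= n)%nat ->
  represents (itint_rev 0 [fun t => t ^ (n - 1)]) (fun N => / INR n * delta n N).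
Proof.
  intros Hn. split; [|split].
  - unfold delta. destruct (Nat.eqb_spec 0 n); [lia|]. ring.
  - exists (Rabs (/ INR n)). intros N. rewrite Rabs_mult. unfold delta.
    destruct (Nat.eqb N n); rewrite ?Rabs_R1, ?Rabs_R0; pose proof (Rabs_pos (/ INR n)); nra.
  - intros t Ht. rewrite PSeries_scal', PSeries_delta by auto. simpl.
    rewrite (RInt_ext _ (fun u => u ^ (n - 1))) by (intros; apply Rmult_1_r).
    rewrite (is_RInt_unique _ _ _ _ (is_RInt_pow 0 t (n - 1))).
    replace (S (n - 1)) with n by lia. rewrite pow_i by lia. unfold Rdiv. ring.
Qed.

(* The power series of n times the left-hand side. *)
Definition word_series (n : nat) (ms : list nat) (es : list bool) (x : R) : R :=
  PSeries (blocks_op (combine ms (map sgn es)) (delta n)) x.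

Lemma block_op_ext m e a b M : (forall N, a N = b N) -> block_op m e a M = block_op m e b M.
Proof. intros H. unfold block_op. f_equal. apply sumN_ext; intros; rewrite H; auto. Qed.

Lemma blocks_op_ext L a b M : (forall N, a N = b N) -> blocks_op L a M = blocks_op L b M.
Proof.
  revert a b M; induction L as [|[m e] L IH]; simpl; intros a b M H; auto.
  apply IH. intros; apply block_op_ext; auto.
Qed.

Lemma blocks_op_lin L f g al be M :
  blocks_op L (fun N => al * f N + be * g N) M = al * blocks_op L f M + be * blocks_op L g M.
Proof.
  revert f g M; induction L as [|[m e] L IH]; simpl; intros f g M; auto.
  rewrite (blocks_op_ext L _ (fun N => al * block_op m e f N + be * block_op m e g N))
    by (intros; unfold block_op; rewrite sumN_lin; unfold Rdiv; ring).
  apply IH.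
Qed.

Lemma blocks_op_sumR L n f c (g : nat -> nat -> R) M :
  blocks_op L (fun K => f K - sumR n (fun N => c N * g N K)) M =
  blocks_op L f M - sumR n (fun N => c N * blocks_op L (g N) M).
Proof.
  revert f; induction n; intros f; simpl.
  - rewrite (blocks_op_ext L _ f) by (intros; ring). ring.
  - transitivity (blocks_op L (fun K => (f K - c (S n) * g (S n) K)
                                   - sumR n (fun N => c N * g N K)) M);
      [apply blocks_op_ext; intros; ring|].
    rewrite IHn.
    rewrite (blocks_op_ext L (fun K => f K - c (S n) * g (S n) K)
               (fun K => 1 * f K + (- c (S n)) * g (S n) K)) by (intros; ring).
    rewrite blocks_op_lin. ring.
Qed.

(* The coefficient of x^N in [Mi_l l x], for nonempty [l]. *)
Definition Mi_coef (l : list (nat * R)) (N : nat) : R :=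
  match l with [] => 0 | (k, e) :: rest => coef k e N * Hstrict_l N rest end.

Lemma coef_0 k e : (1 <= k)%nat -> coef k e 0 = 0.
Proof.
  intros H. unfold coef. destruct k; [lia|]. simpl. rewrite Rmult_0_l. unfold Rdiv.
  rewrite Rinv_0; ring.
Qed.

Lemma bounded_coef m s : Rabs s <= 1 -> bounded (coef m s).
Proof.
  intros Hs. exists 2. intros M. unfold coef, Rdiv. rewrite Rabs_mult.
  assert (H1 : Rabs (1 + s * (-1) ^ M) <= 2).
  { eapply Rle_trans; [apply Rabs_triang|]. rewrite Rabs_R1, Rabs_mult, pow_1_abs. lra. }
  assert (H2 : Rabs (/ INR M ^ m) <= 1).
  { destruct M as [|M].
    - destruct m; simpl; [rewrite Rinv_1, Rabs_R1; lra|].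
      rewrite Rmult_0_l, Rinv_0, Rabs_R0; lra.
    - assert (1 <= INR (S M)) by (rewrite S_INR; pose proof (pos_INR M); lra).
      assert (1 <= INR (S M) ^ m) by (apply pow_R1_Rle; auto).
      rewrite Rabs_inv, Rabs_right by lra. rewrite <- Rinv_1. apply Rinv_le_contravar; lra. }
  pose proof (Rabs_pos (1 + s * (-1) ^ M)). pose proof (Rabs_pos (/ INR M ^ m)). nra.
Qed.

Lemma sumN_delta M k f : sumN M (fun N => f N * delta k N) = if Nat.ltb k M then f k else 0.
Proof.
  induction M; simpl; auto. rewrite IHM. unfold delta.
  destruct (Nat.ltb_spec k M), (Nat.ltb_spec k (S M)), (Nat.eqb_spec M k); subst; try lia; ring.
Qed.

Lemma sumR_delta n M c :
  sumR n (fun N => c N * delta N M) = if (Nat.leb 1 M && Nat.leb M n)%bool then c M else 0.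
Proof.
  induction n; cbn [sumR]; [destruct M; simpl; auto|]. rewrite IHn. unfold delta.
  destruct (Nat.leb_spec 1 M), (Nat.leb_spec M n), (Nat.leb_spec M (S n)), (Nat.eqb_spec M (S n));
  cbn [andb]; subst; try lia; ring.
Qed.

Lemma block_delta m e k M : (1 <= m)%nat ->
  block_op m e (delta k) M =
  Mi_coef [(m, e * (-1) ^ k)] M
  - sumR k (fun N => (1 + e * (-1) ^ (k + N)) / INR N ^ m * delta N M).
Proof.
  intros Hm. unfold block_op, Mi_coef. simpl Hstrict_l. rewrite Rmult_1_r.
  rewrite sumN_delta, sumR_delta. destruct M as [|M].
  - simpl (Nat.ltb k 0). rewrite coef_0 by auto. simpl. unfold Rdiv; ring.
  - unfold coef. rewrite !pow_add.
    destruct (Nat.ltb_spec k (S M)), (Nat.leb_spec 1 (S M)), (Nat.leb_spec (S M) k);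
    cbn [andb]; try lia; unfold Rdiv; ring.
Qed.

(* A block prepends one index to an Mi-coefficient sequence; the parity
   condition of the summed index fixes the sign of the new head. *)
Lemma block_Mi_coef m' e' k e rest M : (1 <= k)%nat -> e * e = 1 ->
  block_op m' e' (Mi_coef ((k, e) :: rest)) M = Mi_coef ((m', e' * e) :: (k, e) :: rest) M.
Proof.
  intros Hk He. unfold block_op, Mi_coef. cbn [Hstrict_l].
  rewrite sumN_sumR by (rewrite coef_0 by auto; ring).
  unfold coef at 1. unfold Rdiv at 1 2.
  rewrite (sumR_ext _ _ (fun N => (1 + e' * e * (-1) ^ M) * (coef k e N * Hstrict_l N rest))).
  - rewrite sumR_scal. unfold coef, Rdiv; ring.
  - intros N _. unfold coef. rewrite pow_add.
    transitivity (((1 + e' * ((-1) ^ M * (-1) ^ N)) * (1 + e * (-1) ^ N))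
                  * / INR N ^ k * Hstrict_l N rest); [unfold Rdiv; ring|].
    rewrite sign_identity by (auto; apply pm1_sq). unfold Rdiv; ring.
Qed.

Definition admissible (L : list (nat * R)) : Prop :=
  List.Forall (fun me : nat * R => (1 <= fst me)%nat /\ snd me * snd me = 1) L.

Definition head_sign (l : list (nat * R)) : R := match l with [] => 1 | (_, e) :: _ => e end.

Fixpoint push_blocks (L l : list (nat * R)) : list (nat * R) :=
  match L with [] => l | (m, e') :: L' => push_blocks L' ((m, e' * head_sign l) :: l) end.

Lemma admissible_push_blocks L l : l <> [] -> admissible l -> admissible L ->
  push_blocks L l <> [] /\ admissible (push_blocks L l).
Proof.
  revert l; induction L as [|[m e] L IH]; intros l Hne Hl HL; simpl; auto.
  inversion HL as [|? ? [Hm He] HL']; subst. apply IH; auto; [discriminate|].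
  constructor; auto. simpl. split; auto.
  destruct l as [|[k e0] r]; simpl in *; [contradiction|].
  inversion Hl as [|? ? [_ He0] _]; subst; simpl in He0.
  transitivity ((e * e) * (e0 * e0)); [ring|]. rewrite He, He0; ring.
Qed.

Lemma blocks_Mi_coef L l M : l <> [] -> admissible l -> admissible L ->
  blocks_op L (Mi_coef l) M = Mi_coef (push_blocks L l) M.
Proof.
  revert l M; induction L as [|[m e'] L IH]; intros l M Hne Hl HL; simpl; auto.
  inversion HL as [|? ? Hme HL']; subst.
  destruct l as [|[k e] rest]; [contradiction|].
  inversion Hl as [|? ? [Hk He] _]; subst; simpl in Hk, He. simpl.
  rewrite (blocks_op_ext L _ (Mi_coef ((m, e' * e) :: (k, e) :: rest)))
    by (intros; apply block_Mi_coef; auto).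
  apply IH; auto; [discriminate|]. constructor; auto. simpl in *. split; [lia|].
  destruct Hme as [_ He']. transitivity ((e' * e') * (e * e)); [ring|]. rewrite He', He; ring.
Qed.

Lemma prodR_cons a l : prodR (a :: l) = a * prodR l.
Proof. reflexivity. Qed.

Lemma prodR_app l e : prodR (l ++ [e]) = prodR l * e.
Proof. induction l; simpl; [ring|rewrite IHl; ring]. Qed.

Lemma pvec_app l e : pvec (l ++ [e]) = map (fun y => y * e) (pvec l) ++ [e].
Proof.
  induction l; simpl; [rewrite Rmult_1_r; auto|].
  rewrite IHl, prodR_app. f_equal. ring.
Qed.

Lemma pvec_length l : length (pvec l) = length l.
Proof. induction l; simpl; auto. Qed.

Lemma combine_app_single {A B} (l1 : list A) (l2 : list B) a b :
  length l1 = length l2 -> combine (l1 ++ [a]) (l2 ++ [b]) = combine l1 l2 ++ [(a, b)].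
Proof.
  revert l2; induction l1; intros [|c l2] H; simpl in *; try lia; auto.
  rewrite IHl1 by lia; auto.
Qed.

Lemma push_blocks_closed ms ss k s0 rest : length ms = length ss ->
  push_blocks (combine ms ss) ((k, s0) :: rest) =
  combine (rev ms) (map (Rmult s0) (qvec ss)) ++ (k, s0) :: rest.
Proof.
  revert ss k s0 rest; induction ms as [|m ms IH]; intros [|e ss] k s0 rest Hl;
    simpl in *; try lia; auto.
  rewrite IH by lia. unfold qvec at 2. simpl rev. rewrite pvec_app, map_app, map_map.
  change (map (Rmult s0) [e]) with [s0 * e]. rewrite combine_app_single.
  2:{ rewrite length_rev, length_map, pvec_length, length_rev. lia. }
  rewrite <- app_assoc. simpl. f_equal.
  - f_equal. unfold qvec. apply map_ext. intros; ring.
  - f_equal. f_equal. ring.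
Qed.

Lemma PSeries_Mi_coef l x : l <> [] -> admissible l -> ex_pseries (Mi_coef l) x ->
  PSeries (Mi_coef l) x = Mi_l l x.
Proof.
  intros Hne Hl Hex. destruct l as [|[k e] rest]; [contradiction|].
  inversion Hl as [|? ? [Hk _] _]; subst.
  unfold PSeries, Mi_l. rewrite Series_incr_1.
  - unfold Mi_coef. rewrite coef_0 by auto. rewrite !Rmult_0_l, Rplus_0_l.
    apply Series_ext. intros; ring.
  - eapply ex_series_ext; [|exact Hex]. intros n. rewrite <- pow_n_pow. apply Rmult_comm.
Qed.

Lemma admissible_combine ms es : List.Forall (fun m => (1 <= m)%nat) ms ->
  admissible (combine ms (map sgn es)).
Proof.
  unfold admissible. revert es; induction ms as [|m ms IH]; intros [|b es] H; simpl;
    try apply Forall_nil.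
  inversion H; subst. constructor; [simpl; split; [auto|apply sgn_sq]|apply IH; auto].
Qed.

Lemma bounded_blocks_Mi_coef ms es m1 s :
  length ms = length es -> List.Forall (fun m => (1 <= m)%nat) ms -> (1 <= m1)%nat -> s * s = 1 ->
  bounded (blocks_op (combine ms (map sgn es)) (Mi_coef [(m1, s)])).
Proof.
  intros Hl Hf Hm1 Hs. apply bounded_blocks_op; auto; simpl; [rewrite coef_0 by auto; ring|].
  assert (Hs1 : Rabs s <= 1).
  { assert (Rabs s * Rabs s = 1) by (rewrite <- Rabs_mult, Hs; apply Rabs_R1).
    pose proof (Rabs_pos s). nra. }
  destruct (bounded_coef m1 s Hs1) as [C HC].
  exists C. intros M. simpl. rewrite Rmult_1_r. apply HC.
Qed.

Lemma blocks_Mi_series m1 ms' es' s x :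
  length ms' = length es' -> Rabs x < 1 -> s * s = 1 -> (1 <= m1)%nat ->
  List.Forall (fun m => (1 <= m)%nat) ms' ->
  PSeries (blocks_op (combine ms' (map sgn es')) (Mi_coef [(m1, s)])) x
  = Mi (rev (m1 :: ms')) (map (Rmult s) (qvec (map sgn es')) ++ [s]) x.
Proof.
  intros Hl Hx Hs Hm1 Hf.
  set (L := combine ms' (map sgn es')).
  assert (Hne : [(m1, s)] <> []) by discriminate.
  assert (Hh : admissible [(m1, s)]) by (repeat constructor; auto).
  assert (HL : admissible L) by apply admissible_combine, Hf.
  assert (Hb : bounded (blocks_op L (Mi_coef [(m1, s)]))) by (apply bounded_blocks_Mi_coef; auto).
  assert (Hex : ex_pseries (Mi_coef (push_blocks L [(m1, s)])) x).
  { apply (ex_pseries_ext (blocks_op L (Mi_coef [(m1, s)])));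
      [intros; apply blocks_Mi_coef; auto|apply ex_pseries_bounded; auto]. }
  destruct (admissible_push_blocks L _ Hne Hh HL) as [Hne' Hadm].
  rewrite (PSeries_ext _ (Mi_coef (push_blocks L [(m1, s)])))
    by (intros; apply blocks_Mi_coef; auto).
  rewrite PSeries_Mi_coef by auto.
  unfold Mi, L. rewrite push_blocks_closed by (rewrite length_map; auto).
  simpl rev. rewrite combine_app_single; auto.
  unfold qvec. rewrite length_map, pvec_length, !length_rev, length_map. auto.
Qed.

Lemma itint_word_series n ms es x : (1 <= n)%nat -> length ms = length es ->
  List.Forall (fun m => (1 <= m)%nat) ms -> Rabs x < 1 ->
  INR n * itint 0 (theword n ms es) x = word_series n ms es x.
Proof.
  intros Hn Hl Hf Hx. unfold itint, theword. simpl rev.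
  rewrite itint_integrate_forms. fold (blocks ms es).
  destruct (represents_blocks ms es _ _ Hl Hf (represents_initial n Hn)) as [_ [_ HP]].
  rewrite HP by auto. unfold word_series.
  rewrite (PSeries_ext _ (fun N => / INR n * blocks_op (combine ms (map sgn es)) (delta n) N)).
  - rewrite PSeries_scal'. field. apply not_0_INR; lia.
  - intros N. rewrite (blocks_op_ext _ _ (fun K => / INR n * delta n K + 0 * delta n K))
      by (intros; ring).
    rewrite blocks_op_lin. ring.
Qed.

Lemma sgn_pm1_cases b n : sgn b * (-1) ^ n = 1 \/ sgn b * (-1) ^ n = -1.
Proof.
  destruct (pm1_cases n) as [E|E]; rewrite E; destruct b; simpl; [left|right|right|left]; ring.
Qed.

(* Peeling off the first block: its M-polylogarithm part, minus the
   contributions of the indices N <= n, each of which restarts the word. *)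
Lemma word_series_cons n m1 ms' b1 es' x :
  (1 <= m1)%nat -> length ms' = length es' -> List.Forall (fun m => (1 <= m)%nat) ms' ->
  Rabs x < 1 ->
  word_series n (m1 :: ms') (b1 :: es') x =
  Mi (rev (m1 :: ms'))
     (map (Rmult (sgn b1 * (-1) ^ n)) (qvec (map sgn es')) ++ [sgn b1 * (-1) ^ n]) x
  - sumR n (fun N => (1 + sgn b1 * (-1) ^ (n + N)) / INR N ^ m1 * word_series N ms' es' x).
Proof.
  intros Hm1 Hl Hf Hx.
  set (L := combine ms' (map sgn es')). set (s := sgn b1 * (-1) ^ n).
  set (c := fun N => (1 + sgn b1 * (-1) ^ (n + N)) / INR N ^ m1).
  assert (Hs : s * s = 1) by (destruct (sgn_pm1_cases b1 n) as [E|E]; unfold s; rewrite E; ring).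
  rewrite <- (blocks_Mi_series m1 ms' es' s x) by auto.
  unfold word_series. cbn [combine map blocks_op]. fold L.
  rewrite (PSeries_ext _ (fun M => blocks_op L (Mi_coef [(m1, s)]) M
                                  - sumR n (fun N => c N * blocks_op L (delta N) M))).
  2:{ intros M.
      rewrite (blocks_op_ext _ _ (fun K => Mi_coef [(m1, s)] K - sumR n (fun N => c N * delta N K)))
        by (intros; apply block_delta; auto).
      apply blocks_op_sumR. }
  destruct (PSeries_sumR x n c (fun N => blocks_op L (delta N)) Hx) as [Hex Hsum].
  { intros N HN. apply ex_pseries_bounded; auto. apply bounded_blocks_op; auto.
    - unfold delta. destruct (Nat.eqb_spec 0 N); auto; lia.
    - apply bounded_delta. }
  rewrite PSeries_minus', Hsum; auto.
  apply ex_pseries_bounded; auto. apply bounded_blocks_Mi_coef; auto.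
Qed.

(* The j-th summand of the statement, with the sign s = -1 or 1 of the two sums. *)
Definition rhs_term (s : R) (n : nat) (ms : list nat) (es : list bool) (j : nat) (x : R) : R :=
  Mi (rev (skipn (j - 1) ms)) (map (Rmult s) (qvec (map sgn (skipn j es))) ++ [s]) x
  * (1 + s * prodR (map sgn (firstn j es)) * (-1) ^ n)
  * Mstar n (firstn (j - 1) ms) (map (Rmult s) (pvec (map sgn (skipn 1 (firstn j es))))).

Definition rhs (n : nat) (ms : list nat) (es : list bool) (x : R) : R :=
  (-1) ^ (length ms) * firstsum x n (combine ms (map sgn es))
  + / 2 * sumR (length ms) (fun j =>
      (-1) ^ (j - 1) * (rhs_term (-1) n ms es j x + rhs_term 1 n ms es j x)).

(* Summing the j-th term over the next index N <= n yields the (j+1)-th term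
   for the longer word: the sum is the outermost sum of the M-star factor. *)
Lemma rhs_term_cons s n m1 b1 ms' es' j x : s * s = 1 -> (1 <= j <= length es')%nat ->
  sumR n (fun N => (1 + sgn b1 * (-1) ^ (n + N)) / INR N ^ m1 * rhs_term s N ms' es' j x)
  = rhs_term s n (m1 :: ms') (b1 :: es') (S j) x.
Proof.
  intros Hs Hj. destruct es' as [|b2 es'']; simpl in Hj; [lia|]. destruct j as [|j']; [lia|].
  unfold rhs_term. replace (S j' - 1)%nat with j' by lia.
  replace (S (S j') - 1)%nat with (S j') by lia.
  cbn [skipn firstn map pvec]. rewrite ?prodR_cons.
  set (MI := Mi _ _ x). set (Q := prodR (map sgn (firstn j' es''))).
  unfold Mstar at 2. cbn [combine Mstar_l].
  set (MS := fun N => Mstar_l N (combine (firstn j' ms')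
                                  (map (Rmult s) (pvec (map sgn (firstn j' es'')))))).
  unfold Mstar. fold (MS n).
  rewrite <- sumR_scal. apply sumR_ext. intros N _. fold (MS N).
  assert (HP : (s * (sgn b2 * Q)) * (s * (sgn b2 * Q)) = 1).
  { transitivity ((s * s) * (sgn b2 * sgn b2) * (Q * Q)); [ring|].
    rewrite Hs, sgn_sq. unfold Q; rewrite prodR_sgn_sq. ring. }
  unfold coef. rewrite pow_add.
  transitivity (MI * MS N * / INR N ^ m1 *
     ((1 + sgn b1 * ((-1) ^ n * (-1) ^ N)) * (1 + (s * (sgn b2 * Q)) * (-1) ^ N)));
    [unfold Rdiv; ring|].
  rewrite sign_identity by (auto; apply pm1_sq). unfold Rdiv; ring.
Qed.

Lemma rhs_term_first s n m1 ms' b1 es' x :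
  rhs_term s n (m1 :: ms') (b1 :: es') 1 x =
  Mi (rev (m1 :: ms')) (map (Rmult s) (qvec (map sgn es')) ++ [s]) x * (1 + s * sgn b1 * (-1) ^ n).
Proof.
  unfold rhs_term, Mstar. cbn [Nat.sub skipn firstn map combine Mstar_l prodR fold_right]. ring.
Qed.

Lemma rhs_weighted_sum n m1 ms' b1 es' x : length ms' = length es' ->
  sumR n (fun N => (1 + sgn b1 * (-1) ^ (n + N)) / INR N ^ m1 * rhs N ms' es' x) =
  (-1) ^ length ms' * firstsum x n (combine (m1 :: ms') (map sgn (b1 :: es')))
  + / 2 * sumR (length ms') (fun j => (-1) ^ (j - 1) *
       (rhs_term (-1) n (m1 :: ms') (b1 :: es') (S j) x
        + rhs_term 1 n (m1 :: ms') (b1 :: es') (S j) x)).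
Proof.
  intros Hl. set (p := length ms'). set (c := fun N => (1 + sgn b1 * (-1) ^ (n + N)) / INR N ^ m1).
  rewrite (sumR_ext n _ (fun N => c N * rhs N ms' es' x)) by reflexivity. unfold rhs. fold p.
  transitivity (sumR n (fun N => (-1) ^ p * (c N * firstsum x N (combine ms' (map sgn es'))))
     + / 2 * sumR n (fun N => sumR p (fun j => (-1) ^ (j - 1) * (c N * rhs_term (-1) N ms' es' j x)
                                             + (-1) ^ (j - 1) * (c N * rhs_term 1 N ms' es' j x)))).
  { rewrite <- sumR_scal, <- sumR_plus. apply sumR_ext; intros N _.
    rewrite Rmult_plus_distr_l. f_equal; [ring|].
    transitivity (/ 2 * (c N * sumR p (fun j => (-1) ^ (j - 1)
                     * (rhs_term (-1) N ms' es' j x + rhs_term 1 N ms' es' j x)))); [ring|].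
    f_equal. rewrite <- sumR_scal. apply sumR_ext; intros; ring. }
  rewrite sumR_scal, sumR_swap. f_equal. f_equal. apply sumR_ext. intros j Hj.
  rewrite sumR_plus, !sumR_scal. unfold c.
  rewrite <- !rhs_term_cons; auto; try ring; unfold p in *; lia.
Qed.

Lemma sumR_sign_shift n f :
  sumR n (fun j => (-1) ^ (S j - 1) * f j) = - sumR n (fun j => (-1) ^ (j - 1) * f j).
Proof.
  transitivity (-1 * sumR n (fun j => (-1) ^ (j - 1) * f j)); [|ring].
  rewrite <- sumR_scal. apply sumR_ext. intros j Hj.
  replace (S j - 1)%nat with (S (j - 1)) by lia. simpl. ring.
Qed.

(* The right-hand side satisfies the recursion of [word_series_cons]; the new
   first term interpolates the M-polylogarithm of sign sgn(b1) (-1)^n. *)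
Lemma rhs_cons n m1 ms' b1 es' x : length ms' = length es' ->
  rhs n (m1 :: ms') (b1 :: es') x =
  Mi (rev (m1 :: ms'))
     (map (Rmult (sgn b1 * (-1) ^ n)) (qvec (map sgn es')) ++ [sgn b1 * (-1) ^ n]) x
  - sumR n (fun N => (1 + sgn b1 * (-1) ^ (n + N)) / INR N ^ m1 * rhs N ms' es' x).
Proof.
  intros Hl. rewrite rhs_weighted_sum by auto.
  unfold rhs at 1. cbn [length]. rewrite sumR_shift, !rhs_term_first.
  rewrite (sumR_sign_shift _ (fun j => rhs_term (-1) n (m1 :: ms') (b1 :: es') (S j) x
                                     + rhs_term 1 n (m1 :: ms') (b1 :: es') (S j) x)).
  rewrite (sign_interpolation
             (fun s => Mi (rev (m1 :: ms')) (map (Rmult s) (qvec (map sgn es')) ++ [s]) x)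
             (sgn b1 * (-1) ^ n) (sgn_pm1_cases b1 n)).
  simpl pow. ring.
Qed.

(* Induction on the depth: both sides satisfy the same recursion. *)
Lemma word_series_rhs x : Rabs x < 1 -> forall ms es n, length ms = length es ->
  List.Forall (fun m => (1 <= m)%nat) ms -> word_series n ms es x = rhs n ms es x.
Proof.
  intros Hx ms. induction ms as [|m1 ms' IH]; intros [|b1 es'] n Hl Hf; simpl in Hl; try lia.
  - unfold word_series, rhs. simpl. rewrite PSeries_delta by auto. ring.
  - inversion Hf; subst. rewrite word_series_cons, rhs_cons by (auto; lia). f_equal.
    apply sumR_ext. intros N HN. rewrite IH by (auto; lia). reflexivity.
Qed.

(* The two sums of the statement are the rhs terms of sign -1 and 1. *)
Lemma map_Ropp l : map Ropp l = map (Rmult (-1)) l.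
Proof. apply map_ext. intros; ring. Qed.

Lemma map_Rmult_1 l : map (Rmult 1) l = l.
Proof. rewrite <- (map_id l) at 2. apply map_ext. intros; ring. Qed.

Theorem mainTheorem9 (n p : nat) (ms : list nat) (es : list bool) (x : R) :
  (1 <= n)%nat ->
  length ms = p -> length es = p ->
  List.Forall (fun m => (1 <= m)%nat) ms ->
  Rabs x < 1 ->
  INR n * itint 0 (theword n ms es) x =
    (-1) ^ p * firstsum x n (combine ms (map sgn es))
  + / 2 * sumR p (fun j =>
      (-1) ^ (j - 1)
      * Mi (rev (skipn (j - 1) ms))
           (map Ropp (qvec (map sgn (skipn j es))) ++ [-1]) x
      * (1 - prodR (map sgn (firstn j es)) * (-1) ^ n)
      * Mstar n (firstn (j - 1) ms) (map Ropp (pvec (map sgn (skipn 1 (firstn j es))))))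
  + / 2 * sumR p (fun j =>
      (-1) ^ (j - 1)
      * Mi (rev (skipn (j - 1) ms))
           (qvec (map sgn (skipn j es)) ++ [1]) x
      * (1 + prodR (map sgn (firstn j es)) * (-1) ^ n)
      * Mstar n (firstn (j - 1) ms) (pvec (map sgn (skipn 1 (firstn j es))))).
Proof.
  intros Hn Hlm Hle Hf Hx.
  rewrite itint_word_series, word_series_rhs by (auto; lia).
  unfold rhs. rewrite Hlm, Rplus_assoc. f_equal.
  rewrite <- Rmult_plus_distr_l, <- sumR_plus. f_equal. apply sumR_ext. intros j _.
  unfold rhs_term. rewrite !map_Ropp, !map_Rmult_1. ring.
Qed.
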